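(* For all integers $n\geq0$, \[ \sum_{j=0}^n4^{n-j}C_jH_{n-j}=2^{2n+1}H_{n+1}-\binom{2(n+1)}{n+1}O_{n+1}. \]
   Context: $H_n=\sum_{j=1}^n\frac1j$ ($H_0=0$), $O_n=\sum_{j=1}^n\frac1{2j-1}$ ($O_0=0$), and $C_n=\frac1{n+1}\binom{2n}{n}$ is the $n$th Catalan number. *)

From mathcomp Require Import all_boot all_order all_algebra.
Set Implicit Arguments. Unset Strict Implicit. Unset Printing Implicit Defensive.
Import Order.TTheory GRing.Theory Num.Theory.
Local Open Scope ring_scope.

Definition harm (n : nat) : rat := \sum_(1 <= j < n.+1) (j%:R)^-1.

Definition oharm (n : nat) : rat := \sum_(1 <= j < n.+1) ((2 * j - 1)%N%:R)^-1.

Definition catalan (n : nat) : rat := ('C(2 * n, n))%:R / (n.+1)%:R.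

From mathcomp Require Import all_boot all_order all_algebra.
From mathcomp Require Import ring lra zify.
Import GRing.Theory Num.Theory.
Local Open Scope ring_scope.

(* Since H_(m+1) = H_m + 1/(m+1), the left-hand side L_n satisfies
   L_(n+1) = 4 L_n + T_n with T_n = sum_(j <= n) 4^(n+1-j) C_j / (n+1-j).
   Creative telescoping gives a first-order recurrence for T_n, whence the
   closed form T_n = 2 (4^(n+1)/(n+2) + C_(n+1) (O_(n+1) - 1)), and the
   right-hand side R_n obeys the same recurrence R_(n+1) = 4 R_n + T_n. *)

Definition centralbin (k : nat) : rat := 'C(2 * k, k)%:R.

Lemma mul_bin_center k :
  ('C(2 * k.+1, k.+1) * k.+1 = 'C(2 * k, k) * (2 * (2 * k).+1))%N.
Proof.
have := mul_bin_diag (2 * k.+1) k; have := mul_bin_down (2 * k).+1 k.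
have -> : ((2 * k).+1 - k = k.+1)%N by lia.
have -> : ((2 * k.+1).-1 = (2 * k).+1)%N by lia.
by rewrite /=; nia.
Qed.

Lemma centralbinS k :
  centralbin k.+1 = centralbin k * (2 * (2 * k%:R + 1)) / (k%:R + 1).
Proof.
have k0 : 0 <= k%:R :> rat := ler0n _ _.
have : centralbin k.+1 * (k%:R + 1) = centralbin k * (2 * (2 * k%:R + 1)).
  by rewrite /centralbin natr1 -natrM mul_bin_center !natrM -(natr1 (2 * k)) natrM.
move=> <-; field; lra.
Qed.

Lemma catalanE k : catalan k = centralbin k / (k%:R + 1).
Proof. by rewrite /catalan natr1. Qed.

Lemma catalan0 : catalan 0 = 1.
Proof. by rewrite /catalan muln0 bin0 divr1. Qed.

Lemma catalanS k :
  catalan k.+1 = catalan k * (2 * (2 * k%:R + 1)) / (k%:R + 2).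
Proof.
have k0 : 0 <= k%:R :> rat := ler0n _ _.
rewrite !catalanE centralbinS -(natr1 k); field; lra.
Qed.

Lemma harm0 : harm 0 = 0.
Proof. by rewrite /harm big_geq. Qed.

Lemma harmS n : harm n.+1 = harm n + (n%:R + 1)^-1.
Proof. by rewrite /harm big_nat_recr //= natr1. Qed.

Lemma oharmS n : oharm n.+1 = oharm n + (2 * n%:R + 1)^-1.
Proof.
rewrite /oharm big_nat_recr //=.
have -> : (2 * n.+1 - 1 = (2 * n).+1)%N by lia.
by rewrite -natr1 natrM.
Qed.

Lemma expr2_odd k : 2 ^+ (2 * k + 1) = 2 * 4 ^+ k :> rat.
Proof. by rewrite exprD exprM mulrC. Qed.

Definition catalan_harm_conv n : rat :=
  \sum_(0 <= j < n.+1) 4%:R ^+ (n - j) * catalan j * harm (n - j).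

Definition recip_term n j : rat := 4 ^+ (n.+1 - j) * catalan j / (n.+1 - j)%:R.

Definition catalan_recip_conv n : rat := \sum_(0 <= j < n.+1) recip_term n j.

Lemma catalan_harm_convS n :
  catalan_harm_conv n.+1 = 4 * catalan_harm_conv n + catalan_recip_conv n.
Proof.
rewrite /catalan_harm_conv (big_nat_recr n.+1) //= subnn harm0 mulr0 addr0.
rewrite mulr_sumr -big_split; apply: eq_big_nat => j /andP[_ le_jn] /=.
rewrite /recip_term subSn; last by lia.
have k0 : 0 <= (n - j)%:R :> rat := ler0n _ _.
by rewrite harmS exprS -(natr1 (n - j)); field; lra.
Qed.

(* Certificate produced by Zeilberger's algorithm. *)
Definition recip_cert n j : rat := - (2 * (j%:R + 1)) * recip_term n.+1 j.

Lemma recip_term_telescoping n j : (j <= n)%N ->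
  (2 * n%:R + 6) * recip_term n.+1 j - 4 * (2 * n%:R + 3) * recip_term n j
  = recip_cert n j.+1 - recip_cert n j.
Proof.
move=> /subnKC <-; move: (n - j)%N => k.
rewrite /recip_cert /recip_term.
have -> : ((j + k).+2 - j = k.+2)%N by lia.
have -> : ((j + k).+1 - j = k.+1)%N by lia.
have -> : ((j + k).+2 - j.+1 = k.+1)%N by lia.
have j0 : 0 <= j%:R :> rat := ler0n _ _.
have k0 : 0 <= k%:R :> rat := ler0n _ _.
rewrite catalanS !exprS natrD -(natr1 j) -(natr1 k); field; lra.
Qed.

Lemma catalan_recip_convS n :
  (2 * n%:R + 6) * catalan_recip_conv n.+1
  = 4 * (2 * n%:R + 3) * catalan_recip_conv n
    + 8 * catalan n.+1 + 2 * 4 ^+ n.+2 / (n%:R + 2).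
Proof.
have := telescope_sumr_eq (recip_cert n) _ (leq0n n.+1)
  (fun j bound_j => recip_term_telescoping n j (andP bound_j).2).
rewrite sumrB -!mulr_sumr -/(catalan_recip_conv n) => telescoped.
rewrite /catalan_recip_conv big_nat_recr //= -/(catalan_recip_conv n) mulrDr.
rewrite -[X in X + _](subrK (4 * (2 * n%:R + 3) * catalan_recip_conv n)).
rewrite telescoped /recip_cert /recip_term subSS subSnn subn0 catalan0.
have n0 : 0 <= n%:R :> rat := ler0n _ _.
rewrite !exprS -(natr1 n); field; lra.
Qed.

Lemma catalan_recip_convE n :
  catalan_recip_conv n
  = 2 * (4 ^+ n.+1 / (n%:R + 2) + catalan n.+1 * (oharm n.+1 - 1)).
Proof.
elim: n => [|n IH].
  by rewrite /catalan_recip_conv /recip_term big_nat1 oharmS /oharm big_geq.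
have n0 : 0 <= n%:R :> rat := ler0n _ _.
apply: (@mulfI _ (2 * n%:R + 6)); first by lra.
rewrite catalan_recip_convS IH (oharmS n.+1) (catalanS n.+1) !exprS -(natr1 n).
field; lra.
Qed.

Definition catalan_harm_closed n : rat :=
  2%:R ^+ (2 * n + 1) * harm n.+1 - centralbin n.+1 * oharm n.+1.

Lemma catalan_harm_closedS n :
  catalan_harm_closed n.+1
  = 4 * catalan_harm_closed n
    + 2 * (4 ^+ n.+1 / (n%:R + 2) + catalan n.+1 * (oharm n.+1 - 1)).
Proof.
have n0 : 0 <= n%:R :> rat := ler0n _ _.
rewrite /catalan_harm_closed !expr2_odd harmS (harmS n) oharmS (oharmS n).
rewrite centralbinS catalanE centralbinS !exprS -(natr1 n); field; lra.
Qed.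

Theorem corollary2 (n : nat) :
  \sum_(0 <= j < n.+1) (4%:R ^+ (n - j) * catalan j * harm (n - j) : rat)
  = 2%:R ^+ (2 * n + 1) * harm n.+1 - ('C(2 * n.+1, n.+1))%:R * oharm n.+1.
Proof.
rewrite -/(catalan_harm_conv n) -/(catalan_harm_closed n).
elim: n => [|n IH].
  rewrite /catalan_harm_conv /catalan_harm_closed big_nat1 harm0 harmS oharmS.
  by rewrite /harm /oharm !big_geq // /centralbin; field.
by rewrite catalan_harm_convS catalan_harm_closedS IH catalan_recip_convE.
Qed.
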